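(* Let $G$ be split reductive with root system of type $C_r$, $r\geqslant2$, with simple roots $\alpha_1,\dots,\alpha_r$ in Bourbaki labelling ($\alpha_r$ long), and let $\widetilde G$ be an $n$-fold Brylinski--Deligne cover associated with a Weyl-invariant quadratic form $Q$. Partition $\Phi_+=\Phi_{+,I}\sqcup\Phi_{+,II}\sqcup\Phi_{+,III}$ with $\Phi_{+,I}=\{\sum_{i\leqslant k<j}\alpha_k:1\leqslant i<j\leqslant r\}$, $\Phi_{+,II}=\{\sum_{i\leqslant k<j}\alpha_k+2\sum_{j\leqslant k<r}\alpha_k+\alpha_r:1\leqslant i<j\leqslant r\}$, $\Phi_{+,III}=\{2\sum_{i\leqslant k<r}\alpha_k+\alpha_r:1\leqslant i\leqslant r\}$, and $\Phi^\vee_+=\Phi^\vee_{+,I}\sqcup\Phi^\vee_{+,II}\sqcup\Phi^\vee_{+,III}$ with $\Phi^\vee_{+,I}=\{\sum_{i\leqslant k\leqslant r}\alpha^\vee_k:1\leqslant i\leqslant r\}$, $\Phi^\vee_{+,II}=\{\sum_{i\leqslant k<j}\alpha_k^\vee:1\leqslant i<j\leqslant r\}$, $\Phi^\vee_{+,III}=\{\sum_{i\leqslant k<j}\alpha^\vee_k+2\sum_{j\leqslant k\leqslant r}\alpha^\vee_k:1\leqslant i<j\leqslant r\}$. If $2\tilde n_{\alpha_i}=\tilde n_{\alpha_r}$ for all $1\leqslant i<r$, then necessarily $\tilde n_{\alpha_i}=n_{\alpha_i}$ for all $1\leqslant i\leqslant r$ and $$f_X(\Phi^\vee_{+,I})=f_Y(\Phi_{+,III}),\quad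 f_X(\Phi^\vee_{+,II})=f_Y(\Phi_{+,I}),\quad f_X(\Phi^\vee_{+,III})=f_Y(\Phi_{+,II});$$ in this case $f_X(\Phi^\vee_+)=\frac{[1,2r-1]}{2n_{\alpha_1}}\cup\frac{[2,2r-2]}{n_{\alpha_1}}=f_Y(\Phi_+)$. If $\tilde n_\alpha$ is constant on $\alpha\in\Delta$, then $f_X(\Phi^\vee_+)=\frac{1}{\tilde n_\alpha}[1,2r-1]=f_Y(\Phi_+)$.
   Context: $[a,b]$ denotes $\{a,a+1,\dots,b\}$ and $\frac{S}{m}=\{s/m:s\in S\}$. Notation: $\omega_\alpha$ fundamental weights, $\omega^\vee_\alpha$ fundamental coweights, $\rho^\vee=\sum_{\alpha\in\Delta}\omega_\alpha^\vee$. $B_Q(y,z)=Q(y+z)-Q(y)-Q(z)$, $Y_{Q,n}=\{y\in Y:B_Q(y,z)\in n\mathbf Z\ \forall z\in Y\}$, $n_\alpha=n/\gcd(n,Q(\alpha^\vee))$, and $\tilde n_\alpha\in\{n_\alpha,n_\alpha/2\}$ ($\alpha\in\Phi$) defined by $\mathbf Z\alpha^\vee\cap Y_{Q,n}=\mathbf Z\tilde n_\alpha\alpha^\vee$. $f_X:\Phi_+^\vee\to\mathbf Q$, $f_X(\beta^\vee)=\sum_{\alpha\in\Delta}\langle\omega_\alpha/\tilde n_\alpha,\beta^\vee\rangle$; $f_Y:\Phi_+\to\mathbf Q$, $f_Y(\beta)=\langle\rho^\vee,\beta\rangle/\tilde n_\beta$. *)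

From mathcomp Require Import all_boot all_order all_algebra.
Set Implicit Arguments. Unset Strict Implicit. Unset Printing Implicit Defensive.
Import Order.TTheory GRing.Theory Num.Theory.
Local Open Scope ring_scope.

(* Cocharacter lattice Y and character lattice X are both modelled as Z^m
   ('rV[int]_m), with the perfect pairing <x, y> = sum_k x_k y_k. *)
Definition pairing (m : nat) (x y : 'rV[int]_m) : int := \sum_(k < m) x 0 k * y 0 k.

(* Cartan integers <alpha_i, alpha_j^vee> of type C_r, Bourbaki labelling
   (indices 1..r, alpha_r long). *)
Definition cartanC (r i j : nat) : int :=
  if i == j then 2
  else if (i == r) && (j == r.-1) then -2
  else if (i == j.+1) || (j == i.+1) then -1
  else 0.

(* Indexing of the positive roots of C_r (i, j are 1-based). *)
Inductive proot := PI of nat & nat | PII of nat & nat | PIII of nat.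

(* The paper's classes: beta in Phi_{+,I} <-> beta = root (PI i j);
   Phi_{+,II} <-> PII i j; Phi_{+,III} <-> PIII i.  The coroot of PIII i lies
   in Phi^vee_{+,I}, of PI i j in Phi^vee_{+,II}, of PII i j in Phi^vee_{+,III}. *)
Definition isI (r : nat) (p : proot) : bool :=
  if p is PI i j then (1 <= i)%N && (i < j)%N && (j <= r)%N else false.
Definition isII (r : nat) (p : proot) : bool :=
  if p is PII i j then (1 <= i)%N && (i < j)%N && (j <= r)%N else false.
Definition isIII (r : nat) (p : proot) : bool :=
  if p is PIII i then (1 <= i)%N && (i <= r)%N else false.
Definition isPos (r : nat) (p : proot) : bool := [|| isI r p, isII r p | isIII r p].

Definition rootc (r : nat) (p : proot) (k : nat) : int :=
  match p with
  | PI i j => if (i <= k < j)%N then 1 else 0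
  | PII i j => if (i <= k < j)%N then 1 else if (j <= k < r)%N then 2
               else if k == r then 1 else 0
  | PIII i => if (i <= k < r)%N then 2 else if k == r then 1 else 0
  end.

Definition corootc (r : nat) (p : proot) (k : nat) : int :=
  match p with
  | PI i j => if (i <= k < j)%N then 1 else 0
  | PII i j => if (i <= k < j)%N then 1 else if (j <= k <= r)%N then 2 else 0
  | PIII i => if (i <= k <= r)%N then 1 else 0
  end.

Definition comb (r m : nat) (v : nat -> 'rV[int]_m) (c : nat -> int) : 'rV[int]_m :=
  \sum_(1 <= k < r.+1) c k *: v k.

Definition rootv r m (alpha : nat -> 'rV[int]_m) p := comb r alpha (rootc r p).
Definition corootv r m (alphav : nat -> 'rV[int]_m) p := comb r alphav (corootc r p).

Definition BQ m (Q : 'rV[int]_m -> int) (y z : 'rV[int]_m) : int := Q (y + z) - Q y - Q z.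

Definition quadratic_form m (Q : 'rV[int]_m -> int) : Prop :=
  (forall (k : int) y, Q (k *: y) = k ^+ 2 * Q y) /\
  (forall y1 y2 z, BQ Q (y1 + y2) z = BQ Q y1 z + BQ Q y2 z).

Definition weyl_invariant r m (alpha alphav : nat -> 'rV[int]_m) (Q : 'rV[int]_m -> int) :=
  forall p, isPos r p -> forall y,
    Q (y - pairing (rootv r alpha p) y *: corootv r alphav p) = Q y.

Definition inYQn m (Q : 'rV[int]_m -> int) (n : nat) (y : 'rV[int]_m) : Prop :=
  forall z, (n%:Z %| BQ Q y z)%Z.

Definition n_of m (Q : 'rV[int]_m -> int) (n : nat) (y : 'rV[int]_m) : nat :=
  (n %/ gcdn n `|Q y|)%N.

(* f_X(beta^vee) = sum_{alpha in Delta} <omega_alpha / nt_alpha, beta^vee>;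
   <omega_{alpha_k}, beta^vee> is the coefficient of alpha_k^vee in beta^vee. *)
Definition fX r m (alphav : nat -> 'rV[int]_m) (nt : 'rV[int]_m -> nat) (p : proot) : rat :=
  \sum_(1 <= k < r.+1) (corootc r p k)%:~R / (nt (alphav k))%:R.

(* f_Y(beta) = <rho^vee, beta> / nt_beta, with <rho^vee, beta> = height of beta. *)
Definition fY r m (alphav : nat -> 'rV[int]_m) (nt : 'rV[int]_m -> nat) (p : proot) : rat :=
  (\sum_(1 <= k < r.+1) rootc r p k)%:~R / (nt (corootv r alphav p))%:R.

Definition fX_img r m alphav nt (C : proot -> bool) : rat -> Prop :=
  fun q => exists p, C p /\ q = @fX r m alphav nt p.
Definition fY_img r m alphav nt (C : proot -> bool) : rat -> Prop :=
  fun q => exists p, C p /\ q = @fY r m alphav nt p.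

Definition seteq (A B : rat -> Prop) : Prop := forall q, A q <-> B q.

Definition intdiv_set (a b : nat) (d : rat) : rat -> Prop :=
  fun q => exists k : nat, (a <= k <= b)%N /\ q = k%:R / d.

From mathcomp Require Import zify ring lra.
From mathcomp Require Import all_boot all_order all_algebra.
Import Order.TTheory GRing.Theory Num.Theory.
Local Open Scope ring_scope.

(* Weyl invariance under the simple reflection of alpha gives
   B_Q(y, alpha^vee) = <alpha, y> Q(alpha^vee), and the symmetry of B_Q
   against the Cartan matrix of C_r forces Q(alpha_i^vee) = 2 Q(alpha_r^vee)
   for i < r.  Expanding a positive coroot in simple coroots then gives
   B_Q(., beta^vee) = c_beta Q(alpha_r^vee) <beta, .>, with c_beta = 2 for
   short and 1 for long beta.  A short root takes the value -1 or 1 on some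
   simple coroot, and the long root 2(alpha_i + ... + alpha_{r-1}) + alpha_r
   takes the value 2 on alpha_i^vee; hence Z beta^vee cap Y_{Q,n}, and with it
   nt_beta, only depends on the length of beta.  So f_X and f_Y are explicit in
   nt_{alpha_1}, nt_{alpha_r} and the indices of the root, and the set
   identities become arithmetic on those indices. *)

Lemma sumr_nat_single (V : zmodType) a b l (F : nat -> V) :
  (forall k, (a <= k < b)%N -> k != l -> F k = 0) ->
  \sum_(a <= k < b) F k = if (a <= l < b)%N then F l else 0.
Proof.
move=> F0; case: ifP => [/andP[al lb] | l_out]; last first.
  by rewrite big_nat_cond big1 // => k /andP[/andP[ak kb] _]; apply: F0; lia.
rewrite (big_cat_nat (n := l)) ?(ltnW lb) //= [X in _ + X]big_ltn //=.
rewrite [X in X + _]big_nat_cond [X in _ + (_ + X)]big_nat_cond !big1 ?add0r ?addr0 //.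
all: by move=> k /andP[/andP[ak kb] _]; apply: F0; lia.
Qed.

Lemma sumr_nat_const_on (V : zmodType) a b (x : V) (F : nat -> V) :
  (forall k, (a <= k < b)%N -> F k = x) -> \sum_(a <= k < b) F k = x *+ (b - a).
Proof. by move=> Fx; rewrite (eq_big_nat _ _ Fx) sumr_const_nat. Qed.

Lemma pairingDr m (x y z : 'rV[int]_m) : pairing x (y + z) = pairing x y + pairing x z.
Proof. by rewrite /pairing -big_split; apply: eq_bigr => k _; rewrite mxE mulrDr. Qed.

Lemma pairing_comb r m (v : nat -> 'rV[int]_m) c z :
  pairing (comb r v c) z = \sum_(1 <= k < r.+1) c k * pairing (v k) z.
Proof.
rewrite /pairing /comb.
under eq_bigr => i _ do rewrite summxE mulr_suml.
rewrite exchange_big /=; apply: eq_bigr => k _.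
by rewrite mulr_sumr; apply: eq_bigr => i _; rewrite mxE mulrA.
Qed.

Lemma comb_single r m (v : nat -> 'rV[int]_m) c l : (1 <= l <= r)%N ->
  (forall k, k != l -> c k = 0) -> comb r v c = c l *: v l.
Proof.
move=> lr c0; rewrite /comb (@sumr_nat_single _ _ _ l); first by rewrite ifT //; lia.
by move=> k _ /c0 ->; rewrite scale0r.
Qed.

Section QuadraticForm.
Context {m : nat} {Q : 'rV[int]_m -> int}.
Hypothesis HQ : quadratic_form Q.

Lemma BQC y z : BQ Q y z = BQ Q z y.
Proof. by rewrite /BQ [y + z]addrC; ring. Qed.

Lemma BQDl y1 y2 z : BQ Q (y1 + y2) z = BQ Q y1 z + BQ Q y2 z.
Proof. by case: HQ. Qed.

Lemma BQDr z y1 y2 : BQ Q z (y1 + y2) = BQ Q z y1 + BQ Q z y2.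
Proof. by rewrite BQC BQDl !(BQC z). Qed.

Lemma BQ0l z : BQ Q 0 z = 0.
Proof. by have := BQDl 0 0 z; rewrite addr0; lra. Qed.

Lemma BQNl y z : BQ Q (- y) z = - BQ Q y z.
Proof. by have := BQDl y (- y) z; rewrite subrr BQ0l; lra. Qed.

Lemma BQMnl y z k : BQ Q (y *+ k) z = BQ Q y z *+ k.
Proof. by elim: k => [|k IH]; rewrite ?mulr0n ?BQ0l // !mulrS BQDl IH. Qed.

Lemma BQZl (c : int) y z : BQ Q (c *: y) z = c * BQ Q y z.
Proof.
rewrite -[c in c *: _]intz scaler_int.
case: c => k; first by rewrite BQMnl -mulr_natl natz.
by rewrite NegzE mulrNz BQNl BQMnl -mulr_natl natz mulNr.
Qed.

Lemma BQZr (c : int) y z : BQ Q z (c *: y) = c * BQ Q z y.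
Proof. by rewrite BQC BQZl BQC. Qed.

Lemma BQ_diag y : BQ Q y y = 2 * Q y.
Proof.
have -> : BQ Q y y = Q ((2 : int) *: y) - Q y - Q y by rewrite scaler_nat mulr2n.
by case: HQ => QZ _; rewrite QZ; lra.
Qed.

Lemma BQ_combr r (v : nat -> 'rV[int]_m) c z :
  BQ Q z (comb r v c) = \sum_(1 <= k < r.+1) c k * BQ Q z (v k).
Proof.
have BQ0r : BQ Q z 0 = 0 by rewrite BQC BQ0l.
rewrite /comb (big_morph (BQ Q z) (BQDr z) BQ0r).
by apply: eq_bigr => k _; rewrite BQZr.
Qed.

(* Expanding [Q (y - c v) = Q y] gives [c (c Q v - B(y, v)) = 0] with
   [c = <a, y>]; when [c = 0], apply this to [y + v] instead. *)
Lemma BQ_reflection_invariant (a v : 'rV[int]_m) :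
  (forall y, Q (y - pairing a y *: v) = Q y) -> pairing a v = 2 ->
  forall y, BQ Q y v = pairing a y * Q v.
Proof.
move=> Qs av.
have BQv_nz y : pairing a y != 0 -> BQ Q y v = pairing a y * Q v.
  move: (Qs y); set c := pairing a y => Qsy c_nz.
  have QZ : Q (- (c *: v)) = c ^+ 2 * Q v by case: HQ => QZ _; rewrite -scaleNr QZ sqrrN.
  have : Q (y - c *: v) = Q y + Q (- (c *: v)) + BQ Q y (- (c *: v)) by rewrite /BQ; lra.
  rewrite Qsy QZ -scaleNr BQZr => Qexp.
  have : c * (c * Q v - BQ Q y v) = c * 0 by rewrite mulr0; lra.
  by move/(mulfI c_nz)/eqP; rewrite subr_eq0 => /eqP; lra.
move=> y; have [ay0 | /BQv_nz //] := eqVneq (pairing a y) 0.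
have := BQv_nz (y + v); rewrite pairingDr ay0 av add0r BQDl BQ_diag mul0r.
by move/(_ isT); lra.
Qed.

End QuadraticForm.

Lemma dvdn_div_gcdn n x k : (0 < n)%N -> (n %/ gcdn n x %| k)%N = (n %| k * x)%N.
Proof.
move=> n_gt0; have g_gt0 : (0 < gcdn n x)%N by rewrite gcdn_gt0 n_gt0.
by rewrite -(dvdn_pmul2r g_gt0) divnK ?dvdn_gcdl // muln_gcdr dvdn_gcd dvdn_mull.
Qed.

Lemma dvdz_div_gcdn n (x k : int) : (0 < n)%N ->
  ((n %/ gcdn n `|x|)%N%:Z %| k)%Z = (n%:Z %| k * x)%Z.
Proof. by move=> n_gt0; rewrite !dvdzE abszM /= dvdn_div_gcdn. Qed.

Lemma eq_dvdz_generator (a b : nat) (P : int -> Prop) :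
  (forall k, (a%:Z %| k)%Z <-> P k) -> (forall k, (b%:Z %| k)%Z <-> P k) -> a = b.
Proof.
move=> aP bP; apply/eqP; rewrite eqn_dvd.
have := proj2 (aP b%:Z) (proj1 (bP b%:Z) (dvdzz _)).
have := proj2 (bP a%:Z) (proj1 (aP a%:Z) (dvdzz _)).
by rewrite !dvdzE /= => -> ->.
Qed.

Lemma dvdz_forall_unit_value (T : Type) (n c : int) (f : T -> int) (z0 : T) :
  f z0 ^+ 2 = 1 -> (forall z, (n %| c * f z)%Z) <-> (n %| c)%Z.
Proof.
move=> fz0; split=> [ncf | nc z]; last exact: dvdz_mulr.
by have := dvdz_mulr (f z0) (ncf z0); rewrite -mulrA -expr2 fz0 mulr1.
Qed.

Lemma dvdz_forall_double_add (T : Type) (n c : int) (f g h : T -> int) (z0 : T) :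
  (forall z, f z = 2 * g z + h z) -> f z0 = 2 ->
  (forall z, (n %| c * f z)%Z) <-> (n %| c * 2)%Z /\ (forall z, (n %| c * h z)%Z).
Proof.
move=> fE fz0; have c2E z : c * f z = c * 2 * g z + c * h z by rewrite fE; ring.
split=> [ncf | [nc2 nch] z]; last by rewrite c2E rpredD // dvdz_mulr.
have nc2 : (n %| c * 2)%Z by rewrite -fz0.
split=> // z; have -> : c * h z = c * f z - c * 2 * g z by rewrite c2E; ring.
by rewrite rpredB // dvdz_mulr.
Qed.

Ltac solve_ifs := repeat (case: ifP => ?; try (exfalso; lia)); try lia.

Lemma cartanC_colE {r l j} : (1 <= j <= r)%N -> (1 <= l <= r)%N ->
  cartanC r l j = (if (l == j.-1) && (1 < j)%N then -1 else 0) + (if l == j then 2 else 0)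
    + (if (l == j.+1) && (j < r)%N then (if j.+1 == r then -2 else -1) else 0).
Proof. by move=> *; rewrite /cartanC; solve_ifs. Qed.

Lemma sum_mul_cartanC r j (F : nat -> int) : (1 <= j <= r)%N ->
  \sum_(1 <= l < r.+1) F l * cartanC r l j =
  (if (1 < j)%N then - F j.-1 else 0) + 2 * F j +
  (if (j < r)%N then (if j.+1 == r then -2 else -1) * F j.+1 else 0).
Proof.
move=> jr; under eq_big_nat => l lr do rewrite (cartanC_colE jr lr) !mulrDr.
rewrite !big_split /=.
rewrite (@sumr_nat_single _ _ _ j.-1); last by move=> k _ /negbTE ->; rewrite mulr0.
rewrite (@sumr_nat_single _ _ _ j); last by move=> k _ /negbTE ->; rewrite mulr0.
rewrite (@sumr_nat_single _ _ _ j.+1); last by move=> k _ /negbTE ->; rewrite mulr0.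
by rewrite !eqxx /=; solve_ifs; ring.
Qed.

Lemma cartanC_pred_succ r k : (k < r)%N -> cartanC r k k.+1 = -1.
Proof. by move=> kr; rewrite /cartanC; solve_ifs. Qed.

Lemma cartanC_succ_pred r k : (0 < k)%N -> (k < r)%N ->
  cartanC r k.+1 k = if k.+1 == r then -2 else -1.
Proof. by move=> k_gt0 kr; rewrite /cartanC; solve_ifs. Qed.

Section SumsOfCoefficients.
Variables (r i j : nat).
Hypotheses (ij : (1 <= i < j)%N) (jr : (j <= r)%N).

Lemma sum_corootc_PI : \sum_(1 <= k < r) corootc r (PI i j) k = (j - i)%:R.
Proof.
rewrite (@big_cat_nat _ _ _ i 1 r) ?(@big_cat_nat _ _ _ j i r) //=; try lia.
rewrite (@sumr_nat_const_on _ 1 i 0) ?(@sumr_nat_const_on _ i j 1)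
  ?(@sumr_nat_const_on _ j r 0); try by move=> k kb; rewrite /corootc; solve_ifs.
lia.
Qed.

Lemma sum_corootc_PII : \sum_(1 <= k < r) corootc r (PII i j) k = (j - i + 2 * (r - j))%:R.
Proof.
rewrite (@big_cat_nat _ _ _ i 1 r) ?(@big_cat_nat _ _ _ j i r) //=; try lia.
rewrite (@sumr_nat_const_on _ 1 i 0) ?(@sumr_nat_const_on _ i j 1)
  ?(@sumr_nat_const_on _ j r 2); try by move=> k kb; rewrite /corootc; solve_ifs.
lia.
Qed.

Lemma height_PI : \sum_(1 <= k < r.+1) rootc r (PI i j) k = (j - i)%:R.
Proof.
rewrite (@big_cat_nat _ _ _ i 1 r.+1) ?(@big_cat_nat _ _ _ j i r.+1) //=; try lia.
rewrite (@sumr_nat_const_on _ 1 i 0) ?(@sumr_nat_const_on _ i j 1)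
  ?(@sumr_nat_const_on _ j r.+1 0); try by move=> k kb; rewrite /rootc; solve_ifs.
lia.
Qed.

Lemma height_PII : \sum_(1 <= k < r.+1) rootc r (PII i j) k = (j - i + 2 * (r - j) + 1)%:R.
Proof.
rewrite (@big_cat_nat _ _ _ i 1 r.+1) ?(@big_cat_nat _ _ _ j i r.+1)
  ?(@big_cat_nat _ _ _ r j r.+1) //=; try lia.
rewrite (@sumr_nat_const_on _ 1 i 0) ?(@sumr_nat_const_on _ i j 1) ?(@sumr_nat_const_on _ j r 2)
  ?(@sumr_nat_const_on _ r r.+1 1); try by move=> k kb; rewrite /rootc; solve_ifs.
lia.
Qed.

Lemma corootc_PI_r : corootc r (PI i j) r = 0.
Proof. by rewrite /corootc; solve_ifs. Qed.

Lemma corootc_PII_r : corootc r (PII i j) r = 2.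
Proof. by rewrite /corootc; solve_ifs. Qed.

End SumsOfCoefficients.

Section SumsOfCoefficientsLong.
Variables (r i : nat).
Hypothesis ir : (1 <= i <= r)%N.

Lemma sum_corootc_PIII : \sum_(1 <= k < r) corootc r (PIII i) k = (r - i)%:R.
Proof.
rewrite (@big_cat_nat _ _ _ i 1 r) //=; try lia.
rewrite (@sumr_nat_const_on _ 1 i 0) ?(@sumr_nat_const_on _ i r 1);
  try by move=> k kb; rewrite /corootc; solve_ifs.
lia.
Qed.

Lemma height_PIII : \sum_(1 <= k < r.+1) rootc r (PIII i) k = (2 * (r - i) + 1)%:R.
Proof.
rewrite (@big_cat_nat _ _ _ i 1 r.+1) ?(@big_cat_nat _ _ _ r i r.+1) //=; try lia.
rewrite (@sumr_nat_const_on _ 1 i 0) ?(@sumr_nat_const_on _ i r 2)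
  ?(@sumr_nat_const_on _ r r.+1 1); try by move=> k kb; rewrite /rootc; solve_ifs.
lia.
Qed.

Lemma corootc_PIII_r : corootc r (PIII i) r = 1.
Proof. by rewrite /corootc; solve_ifs. Qed.

End SumsOfCoefficientsLong.

(* [coroot_scale p] is [2 / (beta, beta)] for the invariant form in which
   short roots have squared length 1; [(alpha_k, alpha_k)] is 1 for [k < r]
   and 2 for [k = r], whence the coefficient relation below. *)
Definition coroot_scale (p : proot) : int := if p is PIII _ then 1 else 2.

Lemma corootc_rootc r p l : isPos r p -> (1 <= l <= r)%N ->
  corootc r p l * (if (l < r)%N then 2 else 1) = coroot_scale p * rootc r p l.
Proof.
by case: p => [i j|i j|i]; rewrite /isPos /isI /isII /isIII /= => p_pos lr;
  rewrite /corootc /rootc; solve_ifs.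
Qed.

Lemma PII_height_surj {r k} : (2 <= k <= 2 * r - 2)%N ->
  exists i j, [/\ (1 <= i < j)%N, (j <= r)%N & k = j - i + 2 * (r - j) + 1]%N.
Proof.
have [rk | kr] := leqP r k => kb; first by exists 1%N, (2 * r - k)%N; split; lia.
by exists (r.+1 - k)%N, r; split; lia.
Qed.

Lemma nat_parity_cases k : exists t, k = (2 * t).+1 \/ k = (2 * t)%N.
Proof. by exists k./2; have := odd_double_half k; case: (odd k) => /= kE; lia. Qed.

Lemma fX_img_eq_fY_img r m alphav nt (C : proot -> bool) :
  (forall p, C p -> @fX r m alphav nt p = fY r alphav nt p) ->
  seteq (fX_img r alphav nt C) (fY_img r alphav nt C).
Proof. by move=> fXY x; split=> -[p [Cp ->]]; exists p; rewrite fXY. Qed.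

Section RootDatum.
Context {r m : nat} {alpha alphav : nat -> 'rV[int]_m}.
Hypothesis r_ge2 : (2 <= r)%N.
Hypothesis pairing_simple : forall i j, (1 <= i <= r)%N -> (1 <= j <= r)%N ->
  pairing (alpha i) (alphav j) = cartanC r i j.

Lemma rootv_PI_succ l : (1 <= l < r)%N -> rootv r alpha (PI l l.+1) = alpha l.
Proof.
move=> lr; rewrite /rootv (@comb_single _ _ _ _ l); try lia.
  by rewrite /rootc ifT ?scale1r //; lia.
by move=> k kl; rewrite /rootc; solve_ifs.
Qed.

Lemma corootv_PI_succ l : (1 <= l < r)%N -> corootv r alphav (PI l l.+1) = alphav l.
Proof.
move=> lr; rewrite /corootv (@comb_single _ _ _ _ l); try lia.
  by rewrite /corootc ifT ?scale1r //; lia.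
by move=> k kl; rewrite /corootc; solve_ifs.
Qed.

Lemma rootv_PIII_r : rootv r alpha (PIII r) = alpha r.
Proof.
rewrite /rootv (@comb_single _ _ _ _ r); try lia.
  by rewrite /rootc ifF ?eqxx ?scale1r //; lia.
by move=> k kr; rewrite /rootc; solve_ifs.
Qed.

Lemma corootv_PIII_r : corootv r alphav (PIII r) = alphav r.
Proof.
rewrite /corootv (@comb_single _ _ _ _ r); try lia.
  by rewrite /corootc ifT ?scale1r //; lia.
by move=> k kr; rewrite /corootc; solve_ifs.
Qed.

Lemma pairing_rootv_alphav p j : (1 <= j <= r)%N ->
  pairing (rootv r alpha p) (alphav j) = \sum_(1 <= l < r.+1) rootc r p l * cartanC r l j.
Proof.
move=> jr; rewrite /rootv pairing_comb; apply: eq_big_nat => l lr.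
by rewrite pairing_simple //; lia.
Qed.

Lemma pairing_PI_alphav i j : (1 <= i < j)%N -> (j <= r)%N ->
  pairing (rootv r alpha (PI i j)) (alphav j) = -1.
Proof. by move=> *; rewrite pairing_rootv_alphav ?sum_mul_cartanC /rootc; solve_ifs. Qed.

Lemma pairing_PII_alphav i j : (1 <= i < j)%N -> (j <= r)%N ->
  pairing (rootv r alpha (PII i j)) (alphav j) = 1.
Proof. by move=> *; rewrite pairing_rootv_alphav ?sum_mul_cartanC /rootc; solve_ifs. Qed.

Lemma pairing_PIII_alphav i : (1 <= i <= r)%N ->
  pairing (rootv r alpha (PIII i)) (alphav i) = 2.
Proof. by move=> *; rewrite pairing_rootv_alphav ?sum_mul_cartanC /rootc; solve_ifs. Qed.

Lemma pairing_PIIIE i : (1 <= i <= r)%N -> forall z,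
  pairing (rootv r alpha (PIII i)) z =
  2 * \sum_(1 <= l < r) (if (i <= l)%N then 1 else 0) * pairing (alpha l) z
  + pairing (alpha r) z.
Proof.
move=> ir z; rewrite /rootv pairing_comb big_nat_recr; last lia.
have -> : rootc r (PIII i) r = 1 by rewrite /rootc; solve_ifs.
rewrite mul1r mulr_sumr; congr (_ + _); apply: eq_big_nat => l lr.
by rewrite /rootc; solve_ifs; ring.
Qed.

Section CoverData.
Context {n : nat} {Q : 'rV[int]_m -> int} {nt : 'rV[int]_m -> nat}.
Hypothesis n_gt0 : (0 < n)%N.
Hypothesis HQ : quadratic_form Q.
Hypothesis HW : weyl_invariant r alpha alphav Q.
Hypothesis ntP : forall (y : 'rV[int]_m) (k : int),
  inYQn Q n (k *: y) <-> ((nt y)%:Z %| k)%Z.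

Lemma BQ_alphav l : (1 <= l <= r)%N ->
  forall y, BQ Q y (alphav l) = pairing (alpha l) y * Q (alphav l).
Proof.
move=> lr; apply: BQ_reflection_invariant => //; last first.
  by rewrite pairing_simple // /cartanC eqxx.
have [l_lt_r | ->] : (l < r)%N \/ l = r by lia.
  have p_pos : isPos r (PI l l.+1) by rewrite /isPos /isI /=; lia.
  by move=> y; rewrite -rootv_PI_succ -?corootv_PI_succ ?HW //; lia.
have p_pos : isPos r (PIII r) by rewrite /isPos /isIII /=; lia.
by move=> y; rewrite -rootv_PIII_r -corootv_PIII_r HW.
Qed.

Lemma Q_alphav_sym i j : (1 <= i <= r)%N -> (1 <= j <= r)%N ->
  cartanC r i j * Q (alphav i) = cartanC r j i * Q (alphav j).
Proof.
by move=> ir jr; rewrite -!pairing_simple // -!BQ_alphav // BQC.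
Qed.

Let q := Q (alphav r).

Lemma Q_alphav_succ l : (1 <= l < r)%N ->
  Q (alphav l) = (if l.+1 == r then 2 else 1) * Q (alphav l.+1).
Proof.
move=> lr; have := @Q_alphav_sym l l.+1.
rewrite cartanC_pred_succ ?cartanC_succ_pred; try lia.
by move=> /(_ ltac:(lia) ltac:(lia)); case: ifP => _; lra.
Qed.

Lemma Q_alphav_short l : (1 <= l < r)%N -> Q (alphav l) = 2 * q.
Proof.
suff Q_below_r t : (t < r.-1)%N -> Q (alphav (r.-1 - t)) = 2 * q.
  by move=> lr; rewrite -(@subKn l r.-1) ?Q_below_r //; lia.
elim: t => [|t IH] tr; first by rewrite subn0 Q_alphav_succ ?prednK ?eqxx //; lia.
rewrite Q_alphav_succ ?ifF ?mul1r; try lia.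
by rewrite -IH; [congr (Q (alphav _)) |]; lia.
Qed.

Lemma Q_alphavE l : (1 <= l <= r)%N -> Q (alphav l) = (if (l < r)%N then 2 else 1) * q.
Proof.
move=> lr; case: ifP => [l_lt_r | /negbT]; first by rewrite Q_alphav_short //; lia.
by rewrite -leqNgt => rl; rewrite mul1r (_ : l = r) //; lia.
Qed.

Lemma BQ_corootv p : isPos r p ->
  forall z, BQ Q z (corootv r alphav p) = q * coroot_scale p * pairing (rootv r alpha p) z.
Proof.
move=> p_pos z; rewrite /corootv BQ_combr // /rootv pairing_comb !mulr_sumr.
apply: eq_big_nat => l lr; have lr' : (1 <= l <= r)%N by lia.
rewrite BQ_alphav // Q_alphavE //.
transitivity (corootc r p l * (if (l < r)%N then 2 else 1) * pairing (alpha l) z * q); first ring.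
by rewrite corootc_rootc //; ring.
Qed.

Lemma nt_corootvP p : isPos r p -> forall k,
  ((nt (corootv r alphav p))%:Z %| k)%Z <->
  (forall z, (n%:Z %| k * q * coroot_scale p * pairing (rootv r alpha p) z)%Z).
Proof.
move=> p_pos k; rewrite -ntP /inYQn.
by split=> nB z; move: (nB z); rewrite BQZl // BQC BQ_corootv // !mulrA.
Qed.

Lemma nt_short_corootvP p : isI r p || isII r p -> forall k,
  ((nt (corootv r alphav p))%:Z %| k)%Z <-> (n%:Z %| k * q * 2)%Z.
Proof.
move=> p_short; have p_pos : isPos r p by rewrite /isPos orbA p_short.
have [z0 unit_z0] : exists z0, pairing (rootv r alpha p) z0 ^+ 2 = 1.
  case: p p_short {p_pos} => [i j|i j|//]; rewrite /isI /isII /= => ijr; exists (alphav j).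
    by rewrite pairing_PI_alphav //; lia.
  by rewrite pairing_PII_alphav //; lia.
have scale2 : coroot_scale p = 2 by case: p p_short {p_pos unit_z0}.
move=> k; rewrite nt_corootvP // scale2; exact: dvdz_forall_unit_value unit_z0.
Qed.

Lemma nt_long_corootvP i : (1 <= i <= r)%N -> forall k,
  ((nt (corootv r alphav (PIII i)))%:Z %| k)%Z <->
  (n%:Z %| k * q * 2)%Z /\ (forall z, (n%:Z %| k * q * pairing (alpha r) z)%Z).
Proof.
move=> ir k; rewrite nt_corootvP /= ?mulr1; last by rewrite /isPos /isIII /=; lia.
exact: dvdz_forall_double_add (pairing_PIIIE _ ir) (pairing_PIII_alphav _ ir).
Qed.

Local Notation nt_short := (nt (alphav 1%N)).
Local Notation nt_long := (nt (alphav r)).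

Lemma nt_alphav1P k : (nt_short%:Z %| k)%Z <-> (n%:Z %| k * q * 2)%Z.
Proof. by rewrite -corootv_PI_succ ?nt_short_corootvP //= /isI; lia. Qed.

Lemma nt_alphavrP k : (nt_long%:Z %| k)%Z <->
  (n%:Z %| k * q * 2)%Z /\ (forall z, (n%:Z %| k * q * pairing (alpha r) z)%Z).
Proof. by rewrite -corootv_PIII_r nt_long_corootvP //; lia. Qed.

Lemma nt_short_corootv p : isI r p || isII r p -> nt (corootv r alphav p) = nt_short.
Proof. by move=> p_short; apply: eq_dvdz_generator (nt_short_corootvP _ p_short) nt_alphav1P. Qed.

Lemma nt_long_corootv i : (1 <= i <= r)%N -> nt (corootv r alphav (PIII i)) = nt_long.
Proof. by move=> ir; apply: eq_dvdz_generator (nt_long_corootvP _ ir) nt_alphavrP. Qed.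

Lemma nt_alphav_short l : (1 <= l < r)%N -> nt (alphav l) = nt_short.
Proof. by move=> lr; rewrite -corootv_PI_succ ?nt_short_corootv //= /isI; lia. Qed.

Lemma nt_alphav1_gt0 : (0 < nt_short)%N.
Proof.
have /nt_alphav1P : (n%:Z %| n%:Z * q * 2)%Z by rewrite -mulrA dvdz_mulr.
by rewrite dvdzE /= => /dvdn_gt0; apply.
Qed.

Lemma nt_alphav_short_n_of l : (1 <= l < r)%N -> nt (alphav l) = n_of Q n (alphav l).
Proof.
move=> lr; rewrite nt_alphav_short //; apply: eq_dvdz_generator nt_alphav1P _ => k.
by rewrite /n_of dvdz_div_gcdn // Q_alphav_short // [2 * q]mulrC mulrA.
Qed.

Lemma nt_alphavr_n_of : nt_long = (2 * nt_short)%N -> nt_long = n_of Q n (alphav r).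
Proof.
move=> long_twice; set M := n_of Q n (alphav r).
have nMq : (n%:Z %| M%:Z * q)%Z by rewrite -dvdz_div_gcdn.
have L_dvd_M : (nt_long%:Z %| M%:Z)%Z.
  by apply/nt_alphavrP; split=> [|z]; apply: dvdz_mulr.
have M_dvd_L : (M%:Z %| nt_long%:Z)%Z.
  rewrite /M /n_of dvdz_div_gcdn // -/q long_twice PoszM.
  by rewrite -mulrA mulrC; apply/nt_alphav1P.
by apply/eqP; rewrite eqn_dvd; move: L_dvd_M M_dvd_L; rewrite !dvdzE /= => -> ->.
Qed.

Lemma fXE p : fX r alphav nt p =
  (\sum_(1 <= k < r) corootc r p k)%:~R / nt_short%:R + (corootc r p r)%:~R / nt_long%:R.
Proof.
rewrite /fX big_nat_recr /=; last lia.
congr (_ + _); rewrite rmorph_sum mulr_suml; apply: eq_big_nat => k kr.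
by rewrite nt_alphav_short.
Qed.

Section Values.
Variables (i j : nat).
Hypotheses (ij : (1 <= i < j)%N) (jr : (j <= r)%N).

Lemma fX_PI : fX r alphav nt (PI i j) = (j - i)%:R / nt_short%:R.
Proof. by rewrite fXE sum_corootc_PI // corootc_PI_r // rmorph_nat mul0r addr0. Qed.

Lemma fX_PII : fX r alphav nt (PII i j) =
  (j - i + 2 * (r - j))%:R / nt_short%:R + 2 / nt_long%:R.
Proof. by rewrite fXE sum_corootc_PII // corootc_PII_r // rmorph_nat. Qed.

Lemma fY_PI : fY r alphav nt (PI i j) = (j - i)%:R / nt_short%:R.
Proof. by rewrite /fY height_PI // rmorph_nat nt_short_corootv //= /isI; lia. Qed.

Lemma fY_PII : fY r alphav nt (PII i j) = (j - i + 2 * (r - j) + 1)%:R / nt_short%:R.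
Proof. by rewrite /fY height_PII // rmorph_nat nt_short_corootv //= /isII; lia. Qed.

End Values.

Lemma fX_PIII i : (1 <= i <= r)%N ->
  fX r alphav nt (PIII i) = (r - i)%:R / nt_short%:R + 1 / nt_long%:R.
Proof. by move=> ir; rewrite fXE sum_corootc_PIII // corootc_PIII_r // rmorph_nat. Qed.

Lemma fY_PIII i : (1 <= i <= r)%N ->
  fY r alphav nt (PIII i) = (2 * (r - i) + 1)%:R / nt_long%:R.
Proof. by move=> ir; rewrite /fY height_PIII // rmorph_nat nt_long_corootv. Qed.

Let nt_short_neq0 : (nt_short%:R : rat) != 0.
Proof. by rewrite pnatr_eq0 -lt0n nt_alphav1_gt0. Qed.

Section LongTwice.
Hypothesis long_twice : nt_long = (2 * nt_short)%N.

Lemma fX_eq_fY p : isPos r p -> fX r alphav nt p = fY r alphav nt p.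
Proof.
case: p => [i j|i j|i]; rewrite /isPos /isI /isII /isIII /= => p_pos.
- by rewrite fX_PI ?fY_PI //; lia.
- rewrite fX_PII ?fY_PII ?long_twice; try lia.
  by rewrite ?(natrM, natrD); field.
- rewrite fX_PIII ?fY_PIII ?long_twice; try lia.
  by rewrite ?(natrM, natrD); field.
Qed.

Lemma fX_img_long_twice : seteq (fX_img r alphav nt (isPos r))
  (fun x => intdiv_set 1 (2 * r - 1) (2 * nt_short%:R) x \/
            intdiv_set 2 (2 * r - 2) nt_short%:R x).
Proof.
move=> x; split.
  case=> -[i j|i j|i] []; rewrite /isPos /isI /isII /isIII /= => p_pos ->.
  - left; exists (2 * (j - i))%N; split; first lia.
    by rewrite fX_PI ?natrM; try lia; field.
  - right; exists (j - i + 2 * (r - j) + 1)%N; split; first lia.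
    by rewrite fX_PII ?long_twice; try lia; rewrite ?(natrM, natrD); field.
  - left; exists (2 * (r - i) + 1)%N; split; first lia.
    by rewrite fX_PIII ?long_twice; try lia; rewrite ?(natrM, natrD); field.
case=> -[k [kb ->]].
  have [t [kE | kE]] := nat_parity_cases k.
    exists (PIII (r - t)); split; first by rewrite /isPos /isIII /=; lia.
    rewrite fX_PIII ?long_twice ?kE; last lia.
    by rewrite subKn; try lia; rewrite -addn1 !natrM !natrD; field.
  exists (PI 1 t.+1); split; first by rewrite /isPos /isI /=; lia.
  by rewrite fX_PI ?kE ?subn1 ?natrM; try lia; field.
have [i [j [ij jr kE]]] := PII_height_surj kb.
exists (PII i j); split; first by rewrite /isPos /isII /=; lia.
by rewrite fX_PII ?long_twice ?kE //; rewrite ?(natrM, natrD); field.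
Qed.

End LongTwice.

Section EqualNt.
Hypothesis long_eq : nt_long = nt_short.

Lemma fX_img_eq_nt :
  seteq (fX_img r alphav nt (isPos r)) (intdiv_set 1 (2 * r - 1) nt_short%:R).
Proof.
move=> x; split.
  case=> -[i j|i j|i] []; rewrite /isPos /isI /isII /isIII /= => p_pos ->.
  - by exists (j - i)%N; split; [lia | rewrite fX_PI //; lia].
  - exists (j - i + 2 * (r - j) + 2)%N; split; first lia.
    by rewrite fX_PII ?long_eq; try lia; rewrite ?(natrM, natrD); field.
  - exists (r - i + 1)%N; split; first lia.
    by rewrite fX_PIII ?long_eq; try lia; rewrite ?(natrM, natrD); field.
case=> k [kb ->]; have [k_le_r | r_lt_k] := leqP k r.
  have [i [ir ->]] : exists i, (1 <= i <= r)%N /\ k = (r - i + 1)%N.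
    by exists (r.+1 - k)%N; split; lia.
  exists (PIII i); split; first by rewrite /isPos /isIII /=; lia.
  by rewrite fX_PIII ?long_eq // natrD; field.
have [|i [j [ij jr kE]]] := @PII_height_surj r k.-1; first lia.
exists (PII i j); split; first by rewrite /isPos /isII /=; lia.
have -> : k = (j - i + 2 * (r - j) + 2)%N by lia.
by rewrite fX_PII ?long_eq // ?(natrM, natrD); field.
Qed.

Lemma fY_img_eq_nt :
  seteq (intdiv_set 1 (2 * r - 1) nt_short%:R) (fY_img r alphav nt (isPos r)).
Proof.
move=> x; split.
  case=> k [kb ->]; have [t [kE | kE]] := nat_parity_cases k.
    exists (PIII (r - t)); split; first by rewrite /isPos /isIII /=; lia.
    by rewrite fY_PIII ?long_eq ?kE; try lia; congr (_%:R / _); lia.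
  have [|i [j [ij jr k'E]]] := @PII_height_surj r k; first lia.
  exists (PII i j); split; first by rewrite /isPos /isII /=; lia.
  by rewrite fY_PII // -k'E.
case=> -[i j|i j|i] []; rewrite /isPos /isI /isII /isIII /= => p_pos ->.
- by exists (j - i)%N; split; [lia | rewrite fY_PI //; lia].
- by exists (j - i + 2 * (r - j) + 1)%N; split; [lia | rewrite fY_PII //; lia].
- by exists (2 * (r - i) + 1)%N; split; [lia | rewrite fY_PIII ?long_eq //; lia].
Qed.

End EqualNt.

Lemma images_long_twice :
  (forall i, (1 <= i < r)%N -> (2 * nt (alphav i) = nt (alphav r))%N) ->
  (forall i, (1 <= i <= r)%N -> nt (alphav i) = n_of Q n (alphav i)) /\
  seteq (fX_img r alphav nt (isIII r)) (fY_img r alphav nt (isIII r)) /\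
  seteq (fX_img r alphav nt (isI r)) (fY_img r alphav nt (isI r)) /\
  seteq (fX_img r alphav nt (isII r)) (fY_img r alphav nt (isII r)) /\
  seteq (fX_img r alphav nt (isPos r))
        (fun x => intdiv_set 1 (2 * r - 1) (2 * (n_of Q n (alphav 1%N))%:R) x \/
                  intdiv_set 2 (2 * r - 2) (n_of Q n (alphav 1%N))%:R x) /\
  seteq (fun x => intdiv_set 1 (2 * r - 1) (2 * (n_of Q n (alphav 1%N))%:R) x \/
                  intdiv_set 2 (2 * r - 2) (n_of Q n (alphav 1%N))%:R x)
        (fY_img r alphav nt (isPos r)).
Proof.
move=> twice; have long_twice : nt_long = (2 * nt_short)%N by rewrite twice //; lia.
have img_eq (C : proot -> bool) : (forall p, C p -> isPos r p) ->
    seteq (fX_img r alphav nt C) (fY_img r alphav nt C).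
  by move=> C_pos; apply: fX_img_eq_fY_img => p /C_pos; apply: fX_eq_fY.
rewrite -(nt_alphav_short_n_of 1); last lia.
split.
  move=> i ir; have [i_lt_r | ->] : (i < r)%N \/ i = r by lia.
    by rewrite nt_alphav_short_n_of //; lia.
  exact: nt_alphavr_n_of.
do 3 (split; first by apply: img_eq => p; rewrite /isPos => ->; rewrite ?orbT).
split=> [|x]; first exact: fX_img_long_twice.
by rewrite -fX_img_long_twice //; apply: img_eq.
Qed.

Lemma images_equal_nt :
  (forall i j, (1 <= i <= r)%N -> (1 <= j <= r)%N -> nt (alphav i) = nt (alphav j)) ->
  seteq (fX_img r alphav nt (isPos r)) (intdiv_set 1 (2 * r - 1) (nt (alphav 1%N))%:R) /\
  seteq (intdiv_set 1 (2 * r - 1) (nt (alphav 1%N))%:R) (fY_img r alphav nt (isPos r)).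
Proof.
move=> eq_nt; have long_eq : nt_long = nt_short by apply: eq_nt; lia.
by split; [apply: fX_img_eq_nt | apply: fY_img_eq_nt].
Qed.

End CoverData.

End RootDatum.

Theorem lemma3p3 (r m n : nat) (alpha alphav : nat -> 'rV[int]_m)
  (Q : 'rV[int]_m -> int) (nt : 'rV[int]_m -> nat) :
  (2 <= r)%N -> (0 < n)%N ->
  (* root datum of type C_r (Bourbaki labelling) *)
  (forall i j, (1 <= i <= r)%N -> (1 <= j <= r)%N ->
     pairing (alpha i) (alphav j) = cartanC r i j) ->
  quadratic_form Q -> weyl_invariant r alpha alphav Q ->
  (* nt y is the positive generator: Z y  cap  Y_{Q,n} = Z (nt y) y *)
  (forall (y : 'rV[int]_m) (k : int), inYQn Q n (k *: y) <-> ((nt y)%:Z %| k)%Z) ->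
  ( (forall i, (1 <= i < r)%N -> (2 * nt (alphav i) = nt (alphav r))%N) ->
    (forall i, (1 <= i <= r)%N -> nt (alphav i) = n_of Q n (alphav i)) /\
    seteq (fX_img r alphav nt (isIII r)) (fY_img r alphav nt (isIII r)) /\
    seteq (fX_img r alphav nt (isI r)) (fY_img r alphav nt (isI r)) /\
    seteq (fX_img r alphav nt (isII r)) (fY_img r alphav nt (isII r)) /\
    seteq (fX_img r alphav nt (isPos r))
          (fun q => intdiv_set 1 (2 * r - 1) (2 * (n_of Q n (alphav 1%N))%:R) q \/
                    intdiv_set 2 (2 * r - 2) (n_of Q n (alphav 1%N))%:R q) /\
    seteq (fun q => intdiv_set 1 (2 * r - 1) (2 * (n_of Q n (alphav 1%N))%:R) q \/
                    intdiv_set 2 (2 * r - 2) (n_of Q n (alphav 1%N))%:R q)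
          (fY_img r alphav nt (isPos r)) ) /\
  ( (forall i j, (1 <= i <= r)%N -> (1 <= j <= r)%N -> nt (alphav i) = nt (alphav j)) ->
    seteq (fX_img r alphav nt (isPos r)) (intdiv_set 1 (2 * r - 1) (nt (alphav 1%N))%:R) /\
    seteq (intdiv_set 1 (2 * r - 1) (nt (alphav 1%N))%:R) (fY_img r alphav nt (isPos r)) ).
Proof.
move=> r_ge2 n_gt0 pairing_simple HQ HW ntP; split.
- exact (images_long_twice r_ge2 pairing_simple n_gt0 HQ HW ntP).
- exact (images_equal_nt r_ge2 pairing_simple n_gt0 HQ HW ntP).
Qed.
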